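(* Let $B_1,\dots,B_N$ be training bags, $B_i=[B_{i1},\dots,B_{iN_i}]$ with $B_{ij}\in\mathbb{R}^d$, let $\ker$ be a kernel with feature map $\Phi$, and $\nu\in(0,1)$. Let $\lambda$ minimize $\sum_{i=1}^N\|\sum_{j}\lambda_{ij}\Phi(B_{ij})-\frac1N\sum_{k}\sum_{j}\lambda_{kj}\Phi(B_{kj})\|^2$ subject to $\sum_j\lambda_{ij}=1$, $\lambda_{ij}\ge0$; set $b_i=\sum_j\lambda_{ij}\Phi(B_{ij})$. Let $\alpha$ solve $\min_\alpha\frac12\sum_{i,j}\alpha_i\alpha_j\ker(b_i,b_j)$ s.t. $0\le\alpha_i\le\frac1{\nu N}$, $\sum_i\alpha_i=1$, with $\rho$ and $l(x)=\sum_j\alpha_j\sum_k\lambda_{jk}\ker(x,B_{jk})-\rho$ as in one-class SVM. For each $i$ let $s_i=\arg\max_{j=1,\dots,N_i} l(B_{ij})$, and form the $2N$ training points $\{x_1,\dots,x_{2N}\}=\{b_1,\dots,b_N\}\cup\{B_{1s_1},\dots,B_{Ns_N}\}$. Let $\alpha'$ solve $$\min_{\alpha'}\tfrac12\sum_{p,q}\alpha'_p\alpha'_q\ker(x_p,x_q)\quad\text{s.t. } 0\le\alpha'_p\le\frac{1}{2\nu N},\ \sum_p\alpha'_p=1,$$ let $\rho'=\sum_{p=1}^{2N}\alpha'_p\ker(x_p,x_q)$ for an index $q$ with $0<\alpha'_q<\frac{1}{2\nu N}$, let $l'(x)=\sum_{p=1}^{2N}\alpha'_p\ker(x,x_p)-\rho'$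 and $f'(B_i)=\operatorname{sign}(\max_{r=1,\dots,N_i} l'(B_{ir}))$. If $\rho'\neq0$, then $\nu$ is an upper bound on the fraction of outlier bags, i.e. at most $\nu N$ of the training bags are outlier bags.
   Context: $\operatorname{sign}(y)=+1$ if $y\ge0$ and $-1$ otherwise; $\ker(x,y)=\Phi(x)\cdot\Phi(y)$, and kernel values involving virtual instances are expanded linearly, e.g. $\ker(b_i,x)=\sum_k\lambda_{ik}\ker(B_{ik},x)$. In this setting an outlier bag is a training bag $B_i$ that falls outside the decision boundary of the learned function, i.e. with $f'(B_i)=-1$. *)

From HB Require Import structures.
From mathcomp Require Import all_boot all_order all_algebra.
From mathcomp Require Export reals.
Set Implicit Arguments. Unset Strict Implicit. Unset Printing Implicit Defensive.
Import Order.TTheory GRing.Theory Num.Theory.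
Local Open Scope ring_scope.

(* Real inner product on an R-vector space V (the feature space of the kernel):
   linear in the first argument, symmetric, positive definite. *)
Definition inner_product (R : realType) (V : lmodType R) (ip : V -> V -> R) : Prop :=
  [/\ forall (a : R) (u v w : V), ip (a *: u + v) w = a * ip u w + ip v w,
      forall u v : V, ip u v = ip v u,
      forall v : V, 0 <= ip v v &
      forall v : V, ip v v = 0 -> v = 0].

Definition sgn (R : realType) (y : R) : R := if 0 <= y then 1 else -1.

Definition seqmax (R : realType) (s : seq R) : R := foldr Num.max (head 0 s) s.

(* max_{r < n} F r  (used only for n > 0) *)
Definition bagmax (R : realType) (n : nat) (F : 'I_n -> R) : R :=
  seqmax [seq F r | r <- enum 'I_n].

Definition vinst (R : realType) (d N : nat) (V : lmodType R) (Phi : 'rV[R]_d -> V)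
  (Ns : 'I_N -> nat) (B : forall i : 'I_N, 'I_(Ns i) -> 'rV[R]_d)
  (lam : forall i : 'I_N, 'I_(Ns i) -> R) (i : 'I_N) : V :=
  \sum_(j < Ns i) lam i j *: Phi (B i j).

Definition lam_feasible (R : realType) (N : nat) (Ns : 'I_N -> nat)
  (lam : forall i : 'I_N, 'I_(Ns i) -> R) : Prop :=
  forall i : 'I_N, (forall j, 0 <= lam i j) /\ \sum_(j < Ns i) lam i j = 1.

Definition lam_obj (R : realType) (d N : nat) (V : lmodType R) (ip : V -> V -> R)
  (Phi : 'rV[R]_d -> V) (Ns : 'I_N -> nat) (B : forall i : 'I_N, 'I_(Ns i) -> 'rV[R]_d)
  (lam : forall i : 'I_N, 'I_(Ns i) -> R) : R :=
  \sum_(i < N)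
    ip (vinst Phi B lam i - N%:R^-1 *: \sum_(k < N) vinst Phi B lam k)
       (vinst Phi B lam i - N%:R^-1 *: \sum_(k < N) vinst Phi B lam k).

Definition lam_optimal (R : realType) (d N : nat) (V : lmodType R) (ip : V -> V -> R)
  (Phi : 'rV[R]_d -> V) (Ns : 'I_N -> nat) (B : forall i : 'I_N, 'I_(Ns i) -> 'rV[R]_d)
  (lam : forall i : 'I_N, 'I_(Ns i) -> R) : Prop :=
  lam_feasible lam /\
  forall mu : forall i : 'I_N, 'I_(Ns i) -> R,
    lam_feasible mu -> lam_obj ip Phi B lam <= lam_obj ip Phi B mu.

Definition qp_feasible (R : realType) (I : finType) (C : R) (a : I -> R) : Prop :=
  (forall p, 0 <= a p <= C) /\ \sum_(p : I) a p = 1.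

Definition qp_obj (R : realType) (V : lmodType R) (ip : V -> V -> R) (I : finType)
  (x : I -> V) (a : I -> R) : R :=
  2^-1 * \sum_(p : I) \sum_(q : I) a p * a q * ip (x p) (x q).

Definition qp_solution (R : realType) (V : lmodType R) (ip : V -> V -> R) (I : finType)
  (x : I -> V) (C : R) (a : I -> R) : Prop :=
  qp_feasible C a /\
  forall a' : I -> R, qp_feasible C a' -> qp_obj ip x a <= qp_obj ip x a'.

From HB Require Import structures.
From mathcomp Require Import all_boot all_order all_algebra.
From mathcomp Require Import reals.
From mathcomp Require Import ring lra.
Import Order.TTheory GRing.Theory Num.Theory.
Set Implicit Arguments. Unset Strict Implicit.
Local Open Scope ring_scope.

(* An outlier bag i has l'(B_ir) < 0 for every instance r, hence also
   l'(B_{i s_i}) < 0 and, l' being affine and b_i a convex combination of the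
   B_ij, l'(b_i) < 0.  A point with l' < 0 has a strictly smaller gradient of
   the dual objective than the free point x_q, so by the KKT conditions of the
   dual its multiplier sits at the box bound 1/(2 nu N).  Each outlier bag
   therefore contributes 2/(2 nu N) to sum_p alpha'_p = 1. *)

Lemma le_foldr_max (R : realDomainType) (s : seq R) (z x : R) :
  x \in s -> x <= foldr Num.max z s.
Proof.
elim: s => //= y s IHs; rewrite inE => /orP[/eqP ->|xs].
  by rewrite le_max lexx.
by rewrite le_max IHs ?orbT.
Qed.

Lemma le_bagmax (R : realType) (n : nat) (F : 'I_n -> R) (r : 'I_n) :
  F r <= bagmax F.
Proof. by apply: le_foldr_max; apply: map_f; rewrite mem_enum. Qed.

Lemma sgn_eqN1 (R : realType) (y : R) : (sgn y == -1) = (y < 0).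
Proof.
rewrite /sgn ltNge; case: ifP => _ /=; last by rewrite eqxx.
by apply/negbTE/eqP => one_eqN1; have : (1 : R) = -1 := one_eqN1; lra.
Qed.

Lemma sum_indicatorB (R : pzRingType) (I : finType) (p q : I) (F : I -> R) :
  \sum_r ((r == p)%:R - (r == q)%:R) * F r = F p - F q.
Proof.
have delta (k : I) : \sum_r (r == k)%:R * F r = F k.
  rewrite (bigD1 k) //= eqxx mul1r big1 ?addr0 // => r /negbTE ->.
  by rewrite mul0r.
by under eq_bigr do rewrite mulrBl; rewrite sumrB !delta.
Qed.

Lemma sum_card_le (R : numDomainType) (I : finType) (S : {set I}) (a : I -> R) (C : R) :
  (forall p, 0 <= a p) -> (forall p, p \in S -> a p = C) -> #|S|%:R * C <= \sum_p a p.
Proof.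
move=> a_ge0 aS; rewrite mulr_natl -sumr_const big_mkcond /=.
by apply: ler_sum => p _; case: ifP => [/aS ->|].
Qed.

Lemma small_step_lt0 (R : realFieldType) (L M c : R) :
  L < 0 -> 0 < c -> exists2 e, 0 < e <= c & e * L + e ^+ 2 * M < 0.
Proof.
move=> L_lt0 c_gt0; have M1_gt0 : 0 < `|M| + 1 by rewrite ltr_wpDl.
pose e := Num.min c (- L / (`|M| + 1)).
have e_gt0 : 0 < e by rewrite lt_min c_gt0 divr_gt0 ?oppr_gt0.
exists e; first by rewrite e_gt0 ge_min lexx.
have eM : e * (`|M| + 1) <= - L by rewrite -ler_pdivlMr // ge_min lexx orbT.
have M_le : M <= `|M| by rewrite real_ler_norm ?num_real.
have eeM : e * (e * M) <= e * (e * `|M|) by do 2 apply: (ler_wpM2l (ltW e_gt0)).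
have : e * (L + e * `|M| + e) <= 0 by rewrite pmulr_rle0 //; lra.
have : 0 < e * e by rewrite mulr_gt0.
rewrite expr2; lra.
Qed.

Section OneClassDual.
Variables (R : realType) (V : lmodType R) (ip : V -> V -> R).
Hypothesis ipC : forall u v, ip u v = ip v u.
Variables (I : finType) (x : I -> V).

Definition qp_grad (a : I -> R) (p : I) : R := \sum_r a r * ip (x p) (x r).

Lemma qp_obj_shift (a h : I -> R) (e : R) :
  qp_obj ip x (fun r => a r + e * h r) =
  qp_obj ip x a + e * \sum_p h p * qp_grad a p + e ^+ 2 * qp_obj ip x h.
Proof.
have cross : \sum_p \sum_r a p * h r * ip (x p) (x r) =
             \sum_p \sum_r h p * a r * ip (x p) (x r).
  rewrite exchange_big; apply: eq_bigr => p _; apply: eq_bigr => r _.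
  by rewrite ipC; ring.
have grad : \sum_p h p * qp_grad a p = \sum_p \sum_r h p * a r * ip (x p) (x r).
  by apply: eq_bigr => p _; rewrite mulr_sumr; apply: eq_bigr => r _; rewrite mulrA.
rewrite /qp_obj grad.
transitivity (2^-1 * (\sum_p \sum_r a p * a r * ip (x p) (x r)
   + e * \sum_p \sum_r h p * a r * ip (x p) (x r)
   + e * \sum_p \sum_r a p * h r * ip (x p) (x r)
   + e ^+ 2 * \sum_p \sum_r h p * h r * ip (x p) (x r))); last first.
  by rewrite cross; field.
congr (_ * _); rewrite !mulr_sumr -!big_split /=; apply: eq_bigr => p _.
by rewrite !mulr_sumr -!big_split /=; apply: eq_bigr => r _; ring.
Qed.

Lemma qp_feasible_transfer (C : R) (a : I -> R) (p q : I) (e : R) :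
  qp_feasible C a -> p != q -> 0 <= e <= C - a p -> e <= a q ->
  qp_feasible C (fun r => a r + e * ((r == p)%:R - (r == q)%:R)).
Proof.
move=> [a_box a_sum] pq /andP[e_ge0 e_le] e_le_aq; split; last first.
  rewrite big_split /= a_sum -mulr_sumr.
  under eq_bigr do rewrite -[_ - _]mulr1.
  by rewrite sum_indicatorB subrr mulr0 addr0.
move=> r; have [->|rp] := eqVneq r p.
  have /andP[ap_ge0 _] := a_box p.
  by rewrite (negbTE pq) subr0 mulr1; apply/andP; split; lra.
have [->|rq] := eqVneq r q.
  have /andP[_ aq_le] := a_box q.
  by rewrite sub0r mulrN1; apply/andP; split; lra.
by rewrite subrr mulr0 addr0 a_box.
Qed.

(* KKT condition of the dual: moving mass from a point q with a q > 0 to a point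
   p below the box bound cannot decrease the objective. *)
Lemma qp_solution_grad_le (C : R) (a : I -> R) (p q : I) :
  qp_solution ip x C a -> a p < C -> 0 < a q -> qp_grad a q <= qp_grad a p.
Proof.
move=> [a_feas a_opt] ap_lt aq_gt0; rewrite leNgt; apply/negP => grad_lt.
have pq : p != q by apply: contraTneq grad_lt => ->; rewrite ltxx.
have grad_lt0 : qp_grad a p - qp_grad a q < 0 by rewrite subr_lt0.
have step_gt0 : 0 < Num.min (C - a p) (a q) by rewrite lt_min subr_gt0 ap_lt aq_gt0.
have [e /andP[e_gt0]] := small_step_lt0
  (qp_obj ip x (fun r => (r == p)%:R - (r == q)%:R)) grad_lt0 step_gt0.
rewrite le_min => /andP[e_le_C e_le_aq] obj_lt.
have e_range : 0 <= e <= C - a p by rewrite ltW.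
have := a_opt _ (qp_feasible_transfer a_feas pq e_range e_le_aq).
rewrite qp_obj_shift sum_indicatorB; lra.
Qed.

End OneClassDual.

Lemma ip_suml (R : realType) (V : lmodType R) (ip : V -> V -> R)
  (J : finType) (c : J -> R) (v : J -> V) (w : V) :
  inner_product ip -> ip (\sum_j c j *: v j) w = \sum_j c j * ip (v j) w.
Proof.
case=> lin _ _ _.
have ip0 : ip 0 w = 0.
  have := lin 1 0 0 w; rewrite scale1r addr0 mul1r => ip0_double.
  by apply: (addrI (ip 0 w)); rewrite addr0 -ip0_double.
have ipD : {morph ip^~ w : u u' / u + u'}.
  by move=> u u' /=; rewrite -{1}[u]scale1r lin mul1r.
rewrite (big_morph _ ipD ip0); apply: eq_bigr => j _.
by rewrite -[_ *: _]addr0 lin ip0 addr0.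
Qed.

Lemma affine_ip_convex (R : realType) (V : lmodType R) (ip : V -> V -> R)
  (J P : finType) (c : J -> R) (v : J -> V) (a : P -> R) (y : P -> V) (t : R) :
  inner_product ip -> \sum_j c j = 1 ->
  \sum_p a p * ip (\sum_j c j *: v j) (y p) - t =
  \sum_j c j * (\sum_p a p * ip (v j) (y p) - t).
Proof.
move=> hip c_sum.
under eq_bigr do rewrite (ip_suml _ _ _ hip) mulr_sumr.
rewrite exchange_big /=.
under [RHS]eq_bigr do rewrite mulrBr mulr_sumr.
rewrite sumrB -mulr_suml c_sum mul1r; congr (_ - _).
by apply: eq_bigr => j _; apply: eq_bigr => p _; ring.
Qed.

Theorem theorem2 (R : realType) (d N : nat) (V : lmodType R) (ip : V -> V -> R)
  (Phi : 'rV[R]_d -> V) (nu : R) (Ns : 'I_N -> nat)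
  (B : forall i : 'I_N, 'I_(Ns i) -> 'rV[R]_d)
  (lam : forall i : 'I_N, 'I_(Ns i) -> R)
  (alpha : 'I_N -> R) (rho : R) (s : forall i : 'I_N, 'I_(Ns i))
  (alpha' : 'I_N + 'I_N -> R) (q : 'I_N + 'I_N) :
  inner_product ip ->
  0 < nu < 1 ->
  (0 < N)%N ->
  (forall i : 'I_N, 0 < Ns i)%N ->
  lam_optimal ip Phi B lam ->
  qp_solution ip (vinst Phi B lam) (nu * N%:R)^-1 alpha ->
  (exists i0 : 'I_N, 0 < alpha i0 < (nu * N%:R)^-1 /\
     rho = \sum_(j < N) alpha j * ip (vinst Phi B lam j) (vinst Phi B lam i0)) ->
  let l := fun x : 'rV[R]_d =>
    \sum_(j < N) alpha j * \sum_(k < Ns j) lam j k * ip (Phi x) (Phi (B j k)) - rho in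
  (forall (i : 'I_N) (j : 'I_(Ns i)), l (B i j) <= l (B i (s i))) ->
  let xs := fun p : 'I_N + 'I_N =>
    match p with inl i => vinst Phi B lam i | inr i => Phi (B i (s i)) end in
  qp_solution ip xs (2 * nu * N%:R)^-1 alpha' ->
  0 < alpha' q < (2 * nu * N%:R)^-1 ->
  let rho' := \sum_(p : 'I_N + 'I_N) alpha' p * ip (xs p) (xs q) in
  let l' := fun v : V => \sum_(p : 'I_N + 'I_N) alpha' p * ip v (xs p) - rho' in
  let f' := fun i : 'I_N => sgn (bagmax (fun r : 'I_(Ns i) => l' (Phi (B i r)))) in
  rho' != 0 ->
  (#|[set i : 'I_N | f' i == -1]|%:R <= nu * N%:R).
Proof.
move=> hip /andP[nu_gt0 _] N_gt0 _ [lam_feas _] _ _ l _ xs alpha'_sol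
  /andP[aq_gt0 aq_lt] rho' l' f' _.
have [_ ipC _ _] := hip.
set C := (2 * nu * N%:R)^-1 in alpha'_sol aq_lt *.
have [[a_box a_sum] _] := alpha'_sol.
have l'_xs p : l' (xs p) = qp_grad ip xs alpha' p - qp_grad ip xs alpha' q.
  by congr (_ - _); apply: eq_bigr => r _; rewrite ipC.
have saturated p : l' (xs p) < 0 -> alpha' p = C.
  have /andP[_ ap_le] := a_box p.
  have [ap_lt|ap_ge] := ltP (alpha' p) C.
    by have := qp_solution_grad_le ipC alpha'_sol ap_lt aq_gt0; rewrite l'_xs; lra.
  by move=> _; apply/eqP; rewrite eq_le ap_le.
have outlier_neg i : f' i == -1 -> l' (xs (inl i)) < 0 /\ l' (xs (inr i)) < 0.
  rewrite /f' sgn_eqN1; set m := bagmax _ => m_lt0.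
  have inst_le r : l' (Phi (B i r)) <= m by apply: le_bagmax.
  split; last exact: le_lt_trans (inst_le _) m_lt0.
  have [lam_ge0 lam_sum] := lam_feas i.
  rewrite /= /vinst {1}/l' affine_ip_convex // (le_lt_trans _ m_lt0) //.
  rewrite -[leRHS]mul1r -lam_sum mulr_suml; apply: ler_sum => j _.
  by apply: (ler_wpM2l (lam_ge0 j)); apply: inst_le.
set S := [set i | f' i == -1].
have inl_sat : #|S|%:R * C <= \sum_i alpha' (inl i).
  apply: sum_card_le => [i|i]; first by case/andP: (a_box (inl i)).
  by rewrite inE => /outlier_neg [/saturated].
have inr_sat : #|S|%:R * C <= \sum_i alpha' (inr i).
  apply: sum_card_le => [i|i]; first by case/andP: (a_box (inr i)).
  by rewrite inE => /outlier_neg [_ /saturated].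
have nuN_gt0 : 0 < nu * N%:R by rewrite mulr_gt0 ?ltr0n.
have : #|S|%:R * C + #|S|%:R * C <= 1 by rewrite -[leRHS]a_sum big_sumType; apply: lerD.
have -> : #|S|%:R * C + #|S|%:R * C = #|S|%:R / (nu * N%:R).
  by rewrite /C; field; rewrite !gt_eqF // ltr0n.
by rewrite ler_pdivrMr // mul1r.
Qed.
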